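(* There is an absolute constant $K>0$ such that the following holds. Let $C\ge1$ be an integer and let $\xi\in(0,1)$ be an irrational number with partial quotients bounded by $C$. Let $N\ge 2$ and $1\le a\le N-1$ be integers with $\gcd(a,N)=1$, and put $\delta = \left|\xi - \frac{a}{N}\right|$. Then $\mathrm{gen}(a,N-a)$ is a binary word with exactly $N-1$ distinct subsequences and of length at most \[ K\left( C\log N + N\sqrt{\delta C^3}\right). \]
   Context: An irrational number $\theta$ with continued fraction $[c_0;c_1,c_2,\ldots]$ has partial quotients bounded by $C$ if $c_i\le C$ for all $i\ge0$. Words are over $\{\mathsf{A},\mathsf{B}\}$; the number of subsequences of a word counts distinct subsequences (not necessarily contiguous), the empty one included. For coprime integers $a,b\ge1$, $\mathrm{gen}(a,b)$ is defined recursively by: $\mathrm{gen}(1,1)$ is the empty word; $\mathrm{gen}(a,b)=\mathsf{A}\circ\mathrm{gen}(a-b,b)$ if $a>b$; $\mathrm{gen}(a,b)=\mathsf{B}\circ\mathrm{gen}(a,b-a)$ if $b>a$, where $\circ$ is concatenation. *)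

From Stdlib Require Import Reals List Arith ZArith.
Import ListNotations.
Open Scope R_scope.

Inductive letter : Type := LA | LB.

Definition letter_eq_dec (x y : letter) : {x = y} + {x <> y}.
Proof. decide equality. Defined.

Definition word := list letter.

Definition word_eq_dec (u v : word) : {u = v} + {u <> v} :=
  list_eq_dec letter_eq_dec u v.

Fixpoint subseqs (w : word) : list word :=
  match w with
  | [] => [ [] ]
  | x :: w' => subseqs w' ++ map (cons x) (subseqs w')
  end.

(** Number of distinct subsequences (empty one included). *)
Definition num_subseq (w : word) : nat :=
  length (nodup word_eq_dec (subseqs w)).

(** gen(a,b), computed with fuel; fuel a+b is sufficient for coprime a,b >= 1
    (each step decreases a+b by at least 1; stops at (1,1)). *)
Fixpoint gen_aux (fuel a b : nat) : word :=
  match fuel with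
  | O => []
  | S f =>
      if Nat.eqb a b then []
      else if Nat.ltb b a then LA :: gen_aux f (a - b) b
      else LB :: gen_aux f a (b - a)
  end.

Definition gen (a b : nat) : word := gen_aux (a + b) a b.

(** Continued fraction of a real: complete quotients and partial quotients.
    Int_part is the floor function. *)
Fixpoint complete_quot (x : R) (n : nat) : R :=
  match n with
  | O => x
  | S m => / (complete_quot x m - IZR (Int_part (complete_quot x m)))
  end.

Definition partial_quot (x : R) (n : nat) : Z := Int_part (complete_quot x n).

Definition irrational (x : R) : Prop :=
  ~ exists (p q : Z), q <> 0%Z /\ x = IZR p / IZR q.

Definition pq_bounded (C : nat) (x : R) : Prop :=
  forall i : nat, (partial_quot x i <= Z.of_nat C)%Z.

(* Counting: let e_x(w) be the number of distinct subsequences u of w such that x u is again a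
   subsequence of w.  The subsequences of x w are those of w together with the words x u, of which
   exactly e_x(w) are old; hence #sub(x w) = 2 #sub(w) - e_x(w), while e_x(x w) = #sub(w) and
   e_y(x w) = e_y(w) for y <> x.  Along the recursion of gen(a, b) this yields #sub = a + b - 1,
   e_A = a - 1 and e_B = b - 1.

   Length: run the subtractive Euclidean algorithm on (a, b) = (a, N - a) and on the real pair
   (x, y) = (xi, 1 - xi) side by side, carrying coefficients P, Q with P x + Q y = 1, starting from
   P = Q = 1 and updated so that P a + Q b = N and |a y - b x| = N delta stay constant.  The real
   algorithm follows the continued fraction of xi, so each of its ratios larger/smaller is some
   x_n - j < C + 1.  While both pairs are ordered alike, each step multiplies P + Q <= N by at least
   1 + 1/(C + 2), so there are O(C log N) such steps.  At the first disagreement, say x < y but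
   a >= b, we have y - x >= y/(C + 2) and P y >= 1/(C + 3), whence (a + b)^2 <= 49 C^3 N |a y - b x|,
   which bounds the a + b remaining letters. *)

From Stdlib Require Import Reals List Arith ZArith Lia Lra.
Import ListNotations.
Open Scope R_scope.

Lemma gen_aux_fuel f1 f2 a b : (1 <= a)%nat -> (1 <= b)%nat ->
  (a + b <= f1)%nat -> (a + b <= f2)%nat -> gen_aux f1 a b = gen_aux f2 a b.
Proof.
  revert f2 a b; induction f1 as [|f IH]; intros [|g] a b Ha Hb H1 H2; try lia; simpl.
  destruct (Nat.eqb_spec a b); [reflexivity|].
  destruct (Nat.ltb_spec b a); f_equal; apply IH; lia.
Qed.

Lemma gen_diag a : gen a a = [].
Proof. unfold gen. destruct (a + a)%nat; simpl; [|rewrite Nat.eqb_refl]; reflexivity. Qed.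

Lemma gen_gt a b : (1 <= b)%nat -> (b < a)%nat -> gen a b = LA :: gen (a - b) b.
Proof.
  intros Hb Hab. unfold gen. replace (a + b)%nat with (S (a + b - 1)) at 1 by lia. simpl.
  destruct (Nat.eqb_spec a b); [lia|]. destruct (Nat.ltb_spec b a); [|lia].
  f_equal. apply gen_aux_fuel; lia.
Qed.

Lemma gen_lt a b : (1 <= a)%nat -> (a < b)%nat -> gen a b = LB :: gen a (b - a).
Proof.
  intros Ha Hab. unfold gen. replace (a + b)%nat with (S (a + b - 1)) at 1 by lia. simpl.
  destruct (Nat.eqb_spec a b); [lia|]. destruct (Nat.ltb_spec b a); [lia|].
  f_equal. apply gen_aux_fuel; lia.
Qed.

Lemma gen_ind (Pr : nat -> nat -> Prop) :
  (forall a, (1 <= a)%nat -> Pr a a) ->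
  (forall a b, (1 <= b)%nat -> (b < a)%nat -> Pr (a - b)%nat b -> Pr a b) ->
  (forall a b, (1 <= a)%nat -> (a < b)%nat -> Pr a (b - a)%nat -> Pr a b) ->
  forall a b, (1 <= a)%nat -> (1 <= b)%nat -> Pr a b.
Proof.
  intros Hdiag Hgt Hlt a b. remember (a + b)%nat as s eqn:Hs.
  revert a b Hs; induction s as [s IH] using lt_wf_ind; intros a b -> Ha Hb.
  destruct (lt_eq_lt_dec a b) as [[Hab| ->]|Hab].
  - apply Hlt; [lia|lia|]. eapply IH; [|reflexivity|..]; lia.
  - apply Hdiag; lia.
  - apply Hgt; [lia|lia|]. eapply IH; [|reflexivity|..]; lia.
Qed.

Lemma length_gen_le a b : (1 <= a)%nat -> (1 <= b)%nat -> (length (gen a b) <= a + b)%nat.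
Proof.
  revert a b; refine (gen_ind _ _ _ _); intros.
  - rewrite gen_diag. simpl. lia.
  - rewrite gen_gt by lia. simpl. lia.
  - rewrite gen_lt by lia. simpl. lia.
Qed.

Lemma length_gen_comm a b : (1 <= a)%nat -> (1 <= b)%nat -> length (gen b a) = length (gen a b).
Proof.
  revert a b; refine (gen_ind _ _ _ _); intros a b.
  - reflexivity.
  - intros Hb Hab IH. rewrite (gen_gt a b), (gen_lt b a) by lia. simpl. congruence.
  - intros Ha Hab IH. rewrite (gen_gt b a), (gen_lt a b) by lia. simpl. congruence.
Qed.

Definition num_distinct (l : list word) : nat := length (nodup word_eq_dec l).

Lemma num_distinct_ext l l' : (forall u, In u l <-> In u l') -> num_distinct l = num_distinct l'.
Proof.
  intros Hl. unfold num_distinct.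
  apply Nat.le_antisymm; apply NoDup_incl_length; try apply NoDup_nodup;
    intros u; rewrite !nodup_In; apply Hl.
Qed.

Lemma num_distinct_NoDup l : NoDup l -> num_distinct l = length l.
Proof. intros Hl. unfold num_distinct. now rewrite nodup_fixed_point. Qed.

Lemma in_subseqs_cons x w u : In u (subseqs (x :: w)) <->
  In u (subseqs w) \/ exists u', u = x :: u' /\ In u' (subseqs w).
Proof.
  simpl. rewrite in_app_iff, in_map_iff.
  split; intros [Hu|(u' & Hu' & Hin)]; eauto.
Qed.

Lemma in_subseqs_tail w x u : In (x :: u) (subseqs w) -> In u (subseqs w).
Proof.
  induction w as [|y w IH]; simpl; rewrite ?in_app_iff, ?in_map_iff.
  - intros [H|[]]; discriminate.
  - intros [H|(u' & Hu' & Hin)]; [eauto|]. injection Hu' as -> ->. now left.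
Qed.

Definition extendable (x : letter) (w u : word) : bool :=
  if in_dec word_eq_dec (x :: u) (subseqs w) then true else false.

Lemma extendable_spec x w u : extendable x w u = true <-> In (x :: u) (subseqs w).
Proof. unfold extendable. destruct in_dec; intuition discriminate. Qed.

Definition num_extendable (x : letter) (w : word) : nat :=
  num_distinct (filter (extendable x w) (subseqs w)).

Lemma num_subseq_cons x w : (num_subseq (x :: w) + num_extendable x w = 2 * num_subseq w)%nat.
Proof.
  set (D := nodup word_eq_dec (subseqs w)).
  assert (HD : NoDup D) by apply NoDup_nodup.
  set (fresh := filter (fun u => negb (extendable x w u)) D).
  assert (Hcons : num_subseq (x :: w) = num_distinct (D ++ map (cons x) fresh)).
  { apply num_distinct_ext. intros u. rewrite in_subseqs_cons, in_app_iff, in_map_iff.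
    unfold fresh, D. setoid_rewrite filter_In. rewrite nodup_In.
    split.
    - intros [Hu|(u' & -> & Hu')]; [now left|].
      destruct (extendable x w u') eqn:Hext.
      + left. now apply extendable_spec.
      + right. exists u'. rewrite nodup_In, Hext. auto.
    - intros [Hu|(u' & <- & Hu' & _)]; [now left|]. right. rewrite nodup_In in Hu'. eauto. }
  assert (Hext : num_extendable x w = length (filter (extendable x w) D)).
  { rewrite <- num_distinct_NoDup by now apply NoDup_filter.
    apply num_distinct_ext. intros u. unfold D. now rewrite !filter_In, nodup_In. }
  rewrite Hcons, Hext, num_distinct_NoDup.
  - rewrite length_app, length_map. pose proof (filter_length (extendable x w) D).
    change (num_subseq w) with (length D). unfold fresh, word in *. lia.
  - apply NoDup_app; [assumption| |].
    + apply NoDup_map_NoDup_ForallPairs; [|now apply NoDup_filter].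
      intros u v _ _ Huv. now injection Huv.
    + intros u Hu Hfresh. apply in_map_iff in Hfresh as (u' & <- & Hu').
      unfold fresh in Hu'. rewrite filter_In in Hu'. destruct Hu' as [_ Hneg].
      unfold D in Hu. rewrite nodup_In, <- extendable_spec in Hu.
      now rewrite Hu in Hneg.
Qed.

Lemma num_extendable_cons_same x w : num_extendable x (x :: w) = num_subseq w.
Proof.
  apply num_distinct_ext. intros u. rewrite filter_In, extendable_spec.
  split.
  - intros [_ Hxu]. apply in_subseqs_cons in Hxu as [Hxu|(u' & Hu' & Hu)].
    + eapply in_subseqs_tail; eauto.
    + now injection Hu' as ->.
  - intros Hu. split; apply in_subseqs_cons; [left|right]; eauto.
Qed.

Lemma num_extendable_cons_other x y w : y <> x -> num_extendable y (x :: w) = num_extendable y w.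
Proof.
  intros Hyx. apply num_distinct_ext. intros u.
  rewrite !filter_In, !extendable_spec, !in_subseqs_cons.
  split.
  - intros [[Hu|(u' & -> & Hu')] [Hyu|(u'' & Hyu & _)]];
      try (injection Hyu as Hyu; congruence); split; eauto using in_subseqs_tail.
  - intros [Hu Hyu]. split; now left.
Qed.

Lemma gen_subseq_counts a b : (1 <= a)%nat -> (1 <= b)%nat -> Nat.gcd a b = 1%nat ->
  num_subseq (gen a b) = (a + b - 1)%nat /\
  num_extendable LA (gen a b) = (a - 1)%nat /\ num_extendable LB (gen a b) = (b - 1)%nat.
Proof.
  revert a b; refine (gen_ind _ _ _ _).
  - intros a _ Hgcd. rewrite Nat.gcd_diag in Hgcd. subst a. now rewrite gen_diag.
  - intros a b Hb Hab IH Hgcd.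
    rewrite Nat.gcd_comm, <- Nat.gcd_sub_diag_r, Nat.gcd_comm in Hgcd by lia.
    destruct (IH Hgcd) as (Hsub & HA & HB).
    pose proof (num_subseq_cons LA (gen (a - b) b)).
    rewrite gen_gt, num_extendable_cons_same, num_extendable_cons_other by (lia || discriminate).
    lia.
  - intros a b Ha Hab IH Hgcd.
    rewrite <- Nat.gcd_sub_diag_r in Hgcd by lia.
    destruct (IH Hgcd) as (Hsub & HA & HB).
    pose proof (num_subseq_cons LB (gen a (b - a))).
    rewrite gen_lt, num_extendable_cons_same, num_extendable_cons_other by (lia || discriminate).
    lia.
Qed.

Lemma irrational_inv_sub_int z k : irrational z -> irrational (/ (z - IZR k)).
Proof.
  intros Hz (p & q & Hq & Hpq). apply Hz.
  assert (Hzk : z - IZR k <> 0).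
  { intros E. apply Hz. exists k, 1%Z. split; [lia|]. rewrite Rdiv_1_r. lra. }
  assert (Hp : IZR p <> 0).
  { intros Hp. rewrite Hp, Rdiv_0_l in Hpq. now apply (Rinv_neq_0_compat _ Hzk). }
  assert (Hq' : IZR q <> 0) by now apply not_0_IZR.
  exists (k * p + q)%Z, p. split; [intros ->; now apply Hp|].
  rewrite plus_IZR, mult_IZR.
  replace z with (IZR k + / (/ (z - IZR k))) by (rewrite Rinv_inv; ring).
  rewrite Hpq. field. auto.
Qed.

Lemma irrational_complete_quot xi n : irrational xi -> irrational (complete_quot xi n).
Proof.
  intros Hxi. induction n as [|n IH]; [exact Hxi|]. now apply irrational_inv_sub_int.
Qed.

Lemma complete_quot_bounds xi n : irrational xi ->
  IZR (partial_quot xi n) < complete_quot xi n < IZR (partial_quot xi n) + 1.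
Proof.
  intros Hxi. unfold partial_quot.
  destruct (base_Int_part (complete_quot xi n)) as [Hle Hlt].
  split; [|lra]. destruct Hle as [Hlt'|Heq]; [exact Hlt'|].
  exfalso. apply (irrational_complete_quot xi n Hxi).
  exists (Int_part (complete_quot xi n)), 1%Z. split; [lia|]. rewrite Heq. lra.
Qed.

Lemma partial_quot_pos xi n : irrational xi -> (1 <= n)%nat -> (1 <= partial_quot xi n)%Z.
Proof.
  intros Hxi Hn. destruct n as [|n]; [lia|].
  pose proof (complete_quot_bounds xi n Hxi) as [Hlo Hhi].
  pose proof (complete_quot_bounds xi (S n) Hxi) as [_ Hhi'].
  assert (Hgt1 : 1 < complete_quot xi (S n)).
  { simpl. rewrite <- Rinv_1. apply Rinv_lt_contravar; fold (partial_quot xi n); lra. }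
  assert (Hpos : 0 < IZR (partial_quot xi (S n))) by lra.
  apply lt_IZR in Hpos. lia.
Qed.

(* The ratios larger/smaller met by the subtractive Euclidean algorithm started at (1, xi): after
   [j] of the [c_n] subtractions of its [n]-th run the ratio is [x_n - j], where [x_n] is the [n]-th
   complete quotient. *)
Definition cf_ratio (xi t : R) : Prop :=
  exists (n : nat) (j : Z), (1 <= n)%nat /\ (0 <= j < partial_quot xi n)%Z /\
    t = complete_quot xi n - IZR j.

Lemma cf_ratio_bounds C xi : irrational xi -> pq_bounded C xi ->
  forall t, cf_ratio xi t -> 1 < t < INR C + 1.
Proof.
  intros Hxi HC t (n & j & Hn & Hj & ->).
  pose proof (complete_quot_bounds xi n Hxi).
  assert (Hj1 : IZR j + 1 <= IZR (partial_quot xi n)).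
  { rewrite <- plus_IZR. apply IZR_le. lia. }
  assert (HCn : IZR (partial_quot xi n) <= INR C).
  { rewrite INR_IZR_INZ. apply IZR_le, HC. }
  assert (0 <= IZR j) by (apply IZR_le; lia).
  lra.
Qed.

Lemma cf_ratio_pred xi : irrational xi -> forall t, cf_ratio xi t ->
  cf_ratio xi (t - 1) \/ (t - 1 < 1 /\ cf_ratio xi (/ (t - 1))).
Proof.
  intros Hxi t (n & j & Hn & Hj & ->).
  destruct (Z.lt_ge_cases (j + 1) (partial_quot xi n)) as [Hnext|Hlast].
  - left. exists n, (j + 1)%Z. split; [exact Hn|]. split; [lia|].
    rewrite plus_IZR. ring.
  - right. assert (Hc : partial_quot xi n = (j + 1)%Z) by lia.
    assert (Ht : complete_quot xi n - IZR j - 1 = complete_quot xi n - IZR (partial_quot xi n)).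
    { rewrite Hc, plus_IZR. ring. }
    rewrite Ht. pose proof (complete_quot_bounds xi n Hxi). split; [lra|].
    exists (S n), 0%Z. split; [lia|]. split.
    + pose proof (partial_quot_pos xi (S n) Hxi). lia.
    + change (IZR 0) with 0. rewrite Rminus_0_r. reflexivity.
Qed.

Lemma cf_ratio_inv xi : 0 < xi < 1 -> irrational xi -> cf_ratio xi (/ xi).
Proof.
  intros Hxi Hirr. exists 1%nat, 0%Z. split; [lia|]. split.
  - pose proof (partial_quot_pos xi 1 Hirr). lia.
  - assert (H0 : Int_part xi = 0%Z) by (symmetry; apply Int_part_spec; simpl; lra).
    simpl. rewrite H0. change (IZR 0) with 0. rewrite !Rminus_0_r. reflexivity.
Qed.

Lemma ln_sub_ge u v : 0 < u -> 0 < v -> 1 - v / u <= ln u - ln v.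
Proof.
  intros Hu Hv. pose proof (exp_ineq1_le (ln v - ln u)) as H.
  unfold Rminus in H. rewrite exp_plus, exp_Ropp, !exp_ln in H by assumption.
  unfold Rdiv. lra.
Qed.

Lemma le_mul_sqrt s c X : 0 <= s -> 0 <= c -> s ^ 2 <= c ^ 2 * X -> s <= c * sqrt X.
Proof.
  intros Hs Hc HX. rewrite <- (sqrt_pow2 s Hs), <- (sqrt_pow2 c Hc), <- sqrt_mult_alt
    by apply pow2_ge_0.
  now apply sqrt_le_1_alt.
Qed.

Section RealEuclid.

(* [T] abstracts the ratios larger/smaller of the real pair: a subtraction maps the ratio [t] to
   [t - 1] or, when that falls below 1, swaps the roles and gives [1 / (t - 1)]. *)
Variables (C : nat) (T : R -> Prop).
Hypothesis T_bounds : forall t, T t -> 1 < t < INR C + 1.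
Hypothesis T_pred : forall t, T t -> T (t - 1) \/ (t - 1 < 1 /\ T (/ (t - 1))).

Lemma C_ge1_of_T t : T t -> 1 <= INR C.
Proof.
  intros Ht. pose proof (T_bounds t Ht).
  destruct (Nat.eq_0_gt_0_cases C) as [HC|HC]; [rewrite HC in *; simpl in *; lra|].
  apply (le_INR 1). lia.
Qed.

Lemma T_gap t : T t -> t < (INR C + 2) * (t - 1).
Proof.
  intros Ht. pose proof (T_bounds t Ht).
  destruct (T_pred t Ht) as [Ht1|[Hlt Ht1]].
  - pose proof (T_bounds _ Ht1). nra.
  - pose proof (T_bounds _ Ht1) as [_ Hinv].
    assert (Hpos : 0 < t - 1) by lra.
    apply (Rmult_lt_compat_l (t - 1)) in Hinv; [|lra].
    rewrite Rinv_r in Hinv by lra. nra.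
Qed.

(* [x > y] is the real pair and [P], [Q] the coefficients of the form [P x + Q y] (kept equal to 1);
   the two inequalities are the invariants that keep [P] and [Q] comparable. *)
Definition oriented (x y P Q : R) : Prop :=
  0 < y /\ (exists t, T t /\ x = t * y) /\ 1 < (INR C + 2) * P * y /\ P < (INR C + 2) * Q.

Definition tracked (x y P Q : R) : Prop := oriented x y P Q \/ oriented y x Q P.

Lemma tracked_comm x y P Q : tracked x y P Q -> tracked y x Q P.
Proof. unfold tracked. tauto. Qed.

Lemma oriented_facts x y P Q : oriented x y P Q -> y < x /\ 0 < P /\ 0 < Q.
Proof.
  intros (Hy & (t & Ht & ->) & Hinv & Hbal). pose proof (T_bounds _ Ht).
  pose proof (C_ge1_of_T _ Ht).
  assert (HPy : 0 < P * y).
  { apply (Rmult_lt_reg_l (INR C + 2)); [lra|]. rewrite Rmult_0_r, <- Rmult_assoc. lra. }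
  assert (0 < P) by nra.
  repeat split; nra.
Qed.

Lemma tracked_pos x y P Q : tracked x y P Q -> 0 < P /\ 0 < Q.
Proof.
  intros [Hor|Hor]; apply oriented_facts in Hor; tauto.
Qed.

Lemma oriented_coef x y P Q : oriented x y P Q -> P * x + Q * y = 1 -> Q < (INR C + 1) * P.
Proof.
  intros Hor Hnorm. pose proof (oriented_facts _ _ _ _ Hor) as (Hyx & HP & HQ).
  destruct Hor as (Hy & _ & Hinv & _).
  assert (Q * y < (INR C + 1) * P * y) by nra.
  nra.
Qed.

Lemma oriented_sub x y P Q : oriented x y P Q -> P * x + Q * y = 1 ->
  tracked (x - y) y P (Q + P).
Proof.
  intros Hor Hnorm. pose proof (oriented_facts _ _ _ _ Hor) as (Hyx & HP & HQ).
  pose proof (oriented_coef _ _ _ _ Hor Hnorm) as Hcoef.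
  destruct Hor as (Hy & (t & Ht & Hx) & Hinv & Hbal).
  destruct (T_pred _ Ht) as [Ht1|[Hlt Ht1]].
  - left. split; [exact Hy|]. split; [exists (t - 1); split; [exact Ht1|lra]|].
    split; [exact Hinv|nra].
  - right. pose proof (T_bounds _ Ht) as [Ht_gt1 _].
    assert (Hxy : 0 < x - y) by lra.
    assert (Hy' : y = / (t - 1) * (x - y)) by (rewrite Hx; field; lra).
    pose proof (T_bounds _ Ht1) as [_ Hratio].
    assert (y < (INR C + 1) * (x - y)) by (rewrite Hy' at 1; nra).
    split; [exact Hxy|]. split; [exists (/ (t - 1)); auto|]. split; nra.
Qed.

Lemma oriented_balanced x y t : 0 < y -> T t -> x = t * y -> x + y = 1 -> oriented x y 1 1.
Proof.
  intros Hy Ht Hx Hsum. pose proof (T_bounds _ Ht). pose proof (C_ge1_of_T _ Ht).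
  split; [exact Hy|]. split; [eauto|]. split; nra.
Qed.

Lemma tracked_start x : 0 < x < 1 -> T (/ x) -> tracked x (1 - x) 1 1.
Proof.
  intros Hx Ht. destruct (T_pred _ Ht) as [Ht1|[_ Ht1]].
  - right. apply (oriented_balanced _ _ (/ x - 1)); [lra|exact Ht1|field; lra|ring].
  - left. apply (oriented_balanced _ _ (/ (/ x - 1))); [lra|exact Ht1| |ring].
    field. split; [lra|]. intros H. field_simplify in H; lra.
Qed.

Lemma oriented_tail a b x y P Q : oriented y x Q P -> P * x + Q * y = 1 -> 0 <= b <= a ->
  (a + b) ^ 2 <= 7 ^ 2 * ((P * a + Q * b) * Rabs (a * y - b * x) * INR C ^ 3).
Proof.
  intros Hor Hnorm Hab. pose proof (oriented_facts _ _ _ _ Hor) as (Hxy & HQ & HP).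
  destruct Hor as (Hx & (t & Ht & Hy) & _ & Hbal).
  pose proof (C_ge1_of_T _ Ht) as HC.
  assert (Hgap : y < (INR C + 2) * (y - x)).
  { pose proof (T_gap _ Ht). rewrite Hy. nra. }
  assert (HPy : 1 < (INR C + 3) * (P * y)) by nra.
  assert (Hcoef : 1 < (INR C + 2) * (INR C + 3) * (P * (y - x))) by nra.
  assert (HD : a * (y - x) <= Rabs (a * y - b * x)).
  { rewrite Rabs_pos_eq; nra. }
  assert (Ha2 : a ^ 2 <= (INR C + 2) * (INR C + 3) * ((P * a) * (a * (y - x)))) by nra.
  assert (HND : (P * a) * (a * (y - x)) <= (P * a + Q * b) * Rabs (a * y - b * x)).
  { apply Rmult_le_compat; nra. }
  assert (HC3 : 4 * ((INR C + 2) * (INR C + 3)) <= 7 ^ 2 * INR C ^ 3) by nra.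
  assert (0 <= P * a * (a * (y - x))) by (apply Rmult_le_pos; nra).
  assert (0 <= INR C ^ 3) by (apply pow_le; lra).
  nra.
Qed.

(* [P a + Q b] and [|a y - b x|] are conserved by simultaneous steps, while [ln (P + Q)] grows. *)
Definition euclid_bound (a b x y P Q : R) : R :=
  (INR C + 3) * (ln (P * a + Q * b) - ln (P + Q)) +
  7 * sqrt ((P * a + Q * b) * Rabs (a * y - b * x) * INR C ^ 3).

Lemma euclid_bound_comm a b x y P Q : euclid_bound b a y x Q P = euclid_bound a b x y P Q.
Proof.
  unfold euclid_bound. now rewrite Rabs_minus_sym, (Rplus_comm (Q * b)), (Rplus_comm Q).
Qed.

Lemma sqrt_le_euclid_bound a b x y P Q : 0 < P -> 0 < Q -> 1 <= a -> 1 <= b ->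
  7 * sqrt ((P * a + Q * b) * Rabs (a * y - b * x) * INR C ^ 3) <= euclid_bound a b x y P Q.
Proof.
  intros HP HQ Ha Hb. unfold euclid_bound.
  assert (ln (P + Q) <= ln (P * a + Q * b)).
  { destruct (Req_dec (P + Q) (P * a + Q * b)) as [-> | Hne]; [lra|].
    left. apply ln_increasing; nra. }
  pose proof (pos_INR C). nra.
Qed.

Lemma euclid_bound_sub a b x y P Q : 0 < P -> 0 < Q -> Q < (INR C + 1) * P ->
  1 + euclid_bound (a - b) b (x - y) y P (Q + P) <= euclid_bound a b x y P Q.
Proof.
  intros HP HQ Hcoef. unfold euclid_bound.
  replace (P * (a - b) + (Q + P) * b) with (P * a + Q * b) by ring.
  replace ((a - b) * y - b * (x - y)) with (a * y - b * x) by ring.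
  pose proof (ln_sub_ge (P + (Q + P)) (P + Q) ltac:(lra) ltac:(lra)) as Hln.
  pose proof (pos_INR C).
  set (S := P + (Q + P)) in *.
  replace (1 - (P + Q) / S) with (P / S) in Hln by (unfold S; field; lra).
  assert (Hgain : (INR C + 3) * (P / S) = 1 + ((INR C + 3) * P - S) / S)
    by (unfold S; field; lra).
  assert (0 < ((INR C + 3) * P - S) / S) by (apply Rdiv_lt_0_compat; unfold S; nra).
  assert (1 < (INR C + 3) * (ln S - ln (P + Q))) by nra.
  lra.
Qed.

Lemma length_gen_sub (a b : nat) x y P Q : (1 <= b)%nat -> (b < a)%nat ->
  tracked x y P Q -> P * x + Q * y = 1 ->
  (forall x' y' P' Q', tracked x' y' P' Q' -> P' * x' + Q' * y' = 1 ->
     INR (length (gen (a - b) b)) <= euclid_bound (INR (a - b)) (INR b) x' y' P' Q') ->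
  INR (length (gen a b)) <= euclid_bound (INR a) (INR b) x y P Q.
Proof.
  intros Hb Hab Htr Hnorm IH.
  assert (Hb1 : 1 <= INR b) by (apply (le_INR 1); lia).
  assert (Hba : INR b < INR a) by (apply lt_INR; lia).
  destruct (tracked_pos _ _ _ _ Htr) as [HP HQ].
  destruct Htr as [Hor|Hor].
  - rewrite gen_gt by lia. simpl length. rewrite S_INR.
    assert (Hnorm' : P * (x - y) + (Q + P) * y = 1) by lra.
    specialize (IH _ _ _ _ (oriented_sub _ _ _ _ Hor Hnorm) Hnorm').
    rewrite minus_INR in IH by lia.
    pose proof (euclid_bound_sub (INR a) (INR b) x y P Q HP HQ (oriented_coef _ _ _ _ Hor Hnorm)).
    lra.
  - eapply Rle_trans; [|apply sqrt_le_euclid_bound; lra].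
    eapply Rle_trans; [apply le_INR, length_gen_le; lia|]. rewrite plus_INR.
    apply le_mul_sqrt; [pose proof (pos_INR a); lra|lra|].
    apply (oriented_tail _ _ _ _ _ _ Hor Hnorm). lra.
Qed.

Lemma length_gen_le_euclid_bound (a b : nat) : (1 <= a)%nat -> (1 <= b)%nat ->
  forall x y P Q, tracked x y P Q -> P * x + Q * y = 1 ->
  INR (length (gen a b)) <= euclid_bound (INR a) (INR b) x y P Q.
Proof.
  revert a b; refine (gen_ind _ _ _ _).
  - intros a Ha x y P Q Htr _. rewrite gen_diag. simpl.
    destruct (tracked_pos _ _ _ _ Htr) as [HP HQ].
    assert (1 <= INR a) by (apply (le_INR 1); lia).
    eapply Rle_trans; [|apply sqrt_le_euclid_bound; lra].
    apply Rmult_le_pos; [lra|apply sqrt_pos].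
  - intros a b Hb Hab IH x y P Q Htr Hnorm. now apply (length_gen_sub a b).
  - intros a b Ha Hab IH x y P Q Htr Hnorm.
    rewrite <- length_gen_comm, <- euclid_bound_comm by lia.
    apply (length_gen_sub b a); [lia|lia|now apply tracked_comm|lra|].
    intros x' y' P' Q' Htr' Hnorm'.
    rewrite length_gen_comm, euclid_bound_comm by lia.
    apply IH; [now apply tracked_comm|lra].
Qed.

End RealEuclid.

Lemma length_gen_le_cf C xi a b : irrational xi -> pq_bounded C xi -> 0 < xi < 1 ->
  (1 <= a)%nat -> (1 <= b)%nat ->
  INR (length (gen a b)) <= euclid_bound C (INR a) (INR b) xi (1 - xi) 1 1.
Proof.
  intros Hirr Hpq Hxi Ha Hb.
  pose proof (cf_ratio_bounds C xi Hirr Hpq) as Hbounds.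
  pose proof (cf_ratio_pred xi Hirr) as Hpred.
  apply (length_gen_le_euclid_bound C (cf_ratio xi) Hbounds Hpred); [lia|lia| |ring].
  exact (tracked_start C _ Hbounds Hpred xi Hxi (cf_ratio_inv xi Hxi Hirr)).
Qed.

Lemma euclid_bound_start_le C xi (N a : nat) : (1 <= C)%nat -> (2 <= N)%nat -> (a <= N)%nat ->
  euclid_bound C (INR a) (INR (N - a)) xi (1 - xi) 1 1 <=
  7 * (INR C * ln (INR N) + INR N * sqrt (Rabs (xi - INR a / INR N) * INR C ^ 3)).
Proof.
  intros HC HN Ha. unfold euclid_bound.
  assert (HN2 : 2 <= INR N) by (apply (le_INR 2); lia).
  assert (HC1 : 1 <= INR C) by (apply (le_INR 1); lia).
  rewrite minus_INR by lia.
  replace (1 * INR a + 1 * (INR N - INR a)) with (INR N) by ring.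
  replace (INR a * (1 - xi) - (INR N - INR a) * xi) with (- (INR N * (xi - INR a / INR N)))
    by (field; lra).
  rewrite Rabs_Ropp, Rabs_mult, (Rabs_pos_eq (INR N)) by lra.
  set (delta := Rabs (xi - INR a / INR N)).
  replace (INR N * (INR N * delta) * INR C ^ 3) with (INR N ^ 2 * (delta * INR C ^ 3)) by ring.
  rewrite sqrt_mult_alt, sqrt_pow2 by (apply pow2_ge_0 || lra).
  assert (0 < ln (1 + 1)) by (rewrite <- ln_1; apply ln_increasing; lra).
  assert (0 <= ln (INR N)) by (rewrite <- ln_1; left; apply ln_increasing; lra).
  pose proof (sqrt_pos (delta * INR C ^ 3)).
  nra.
Qed.

Theorem theorem4 :
  exists K : R, 0 < K /\
  forall (C : nat) (xi : R) (N a : nat),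
    (1 <= C)%nat ->
    0 < xi < 1 -> irrational xi -> pq_bounded C xi ->
    (2 <= N)%nat -> (1 <= a <= N - 1)%nat -> Nat.gcd a N = 1%nat ->
    let delta := Rabs (xi - INR a / INR N) in
    num_subseq (gen a (N - a)) = (N - 1)%nat /\
    INR (length (gen a (N - a))) <=
      K * (INR C * ln (INR N) + INR N * sqrt (delta * INR C ^ 3)).
Proof.
  exists 7. split; [lra|].
  intros C xi N a HC Hxi Hirr Hpq HN Ha Hgcd delta.
  assert (Hgcd' : Nat.gcd a (N - a) = 1%nat) by now rewrite Nat.gcd_sub_diag_r by lia.
  split.
  - replace N with (a + (N - a))%nat at 2 by lia. now apply gen_subseq_counts; [lia|lia|].
  - eapply Rle_trans; [apply length_gen_le_cf; [exact Hirr|exact Hpq|exact Hxi|lia|lia]|].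
    apply euclid_bound_start_le; lia.
Qed.
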